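(* Let $d\ge2$, $A\in\mathcal C^{d-1}$, $p\in[1,\infty)$ and $C_1,C_2\in\mathcal C^d_A$. Then: (1) $\Phi_{C_1,C_2;A,p}(0)=\Phi_{C_1,C_2;A,p}(1)=0$; (2) $\Phi_{C_1,C_2;A,p}$ is continuous on $\mathbb I$, and for $p=1$ it is Lipschitz continuous with constant $2$; (3) $\Phi_{C_1,C_2;A,p}(y)\le 2\min\{y,1-y\}$ for all $y\in\mathbb I$, and this bound is sharp (attained for some $C_1,C_2\in\mathcal C^d_A$ at every $y$). Moreover, $\max_{C_1,C_2\in\mathcal C^d_A}D_{A,p}(C_1,C_2)=2^{-1/p}$.
   Context: $\mathbb I=[0,1]$, $\lambda$ Lebesgue measure. A $d$-copula $C\in\mathcal C^d$ is the distribution function on $\mathbb I^d$ of a probability measure $\mu_C$ with uniform univariate marginals; points are $(\mathbf x,y)$, $\mathbf x\in\mathbb I^{d-1}$. $C_{1:(d-1)}$ is the marginal copula of the first $d-1$ coordinates; $\mathcal C^d_A=\{C\in\mathcal C^d:C_{1:(d-1)}=A\}$ (for $d=2$, $\mu_A=\lambda$, $\mathcal C^2_A=\mathcal C^2$). $K_C$ is the Markov kernel of $C$ w.r.t. the first $d-1$ coordinates: $\mu_C(B\times F)=\int_B K_C(\mathbf x,F)\,\mathrm d\mu_{A}(\mathbf x)$ for $C\in\mathcal C^d_A$. For $C_1,C_2\in\mathcal C^d_A$ and $y\in\mathbb I$, $\Phi_{C_1,C_2;A,p}(y)=\int_{\mathbb I^{d-1}}|K_{C_1}(\mathbf x,[0,y])-K_{C_2}(\mathbf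 x,[0,y])|^p\,\mathrm d\mu_A(\mathbf x)$ and $D_{A,p}(C_1,C_2)=\big(\int_{\mathbb I}\Phi_{C_1,C_2;A,p}(y)\,\mathrm d\lambda(y)\big)^{1/p}$. *)

From HB Require Import structures.
From mathcomp Require Import all_boot all_order all_algebra.
From mathcomp Require Import all_classical all_reals all_analysis.
Set Implicit Arguments. Unset Strict Implicit. Unset Printing Implicit Defensive.
Import Order.TTheory GRing.Theory Num.Theory.
Import numFieldNormedType.Exports.
Local Open Scope classical_set_scope.
Local Open Scope ring_scope.

Definition unif_cdf (R : realType) (t : R) : R := Num.min (Num.max t 0) 1.

(* mu_A for an n-copula A (points of I^n are n-tuples of reals):
   a probability measure on R^n all of whose univariate marginals are
   uniform on [0,1] *)
Definition is_copula_measure (R : realType) (n : nat)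
  (muA : probability (n.-tuple R) R) : Prop :=
  forall (i : 'I_n) (t : R),
    muA [set x | tnth x i <= t] = (unif_cdf t)%:E.

(* mu_C for a copula C on I^(n+1), points written (x, y) with x in I^n *)
Definition is_copula_measure_xy (R : realType) (n : nat)
  (mu : probability (n.-tuple R * R)%type R) : Prop :=
  (forall (i : 'I_n) (t : R),
    mu [set z | tnth z.1 i <= t] = (unif_cdf t)%:E) /\
  (forall t : R, mu [set z | z.2 <= t] = (unif_cdf t)%:E).

(* C in C_A : the marginal on the first n coordinates is mu_A *)
Definition has_marginal (R : realType) (n : nat)
  (muA : probability (n.-tuple R) R)
  (mu : probability (n.-tuple R * R)%type R) : Prop :=
  forall B : set (n.-tuple R), measurable B ->
    mu (B `*` setT) = muA B.

Definition is_markov_kernel_of (R : realType) (n : nat)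
  (muA : probability (n.-tuple R) R)
  (mu : probability (n.-tuple R * R)%type R)
  (K : R.-pker (n.-tuple R) ~> R) : Prop :=
  forall (B : set (n.-tuple R)) (F : set R), measurable B -> measurable F ->
    mu (B `*` F) = (\int[muA]_(x in B) K x F)%E.

Definition Phi (R : realType) (n : nat)
  (muA : probability (n.-tuple R) R)
  (K1 K2 : R.-pker (n.-tuple R) ~> R) (p : R) (y : R) : R :=
  Rintegral muA setT
    (fun x => `| fine (K1 x [set` `[0, y]]) - fine (K2 x [set` `[0, y]]) | `^ p).

Definition Dist (R : realType) (n : nat)
  (muA : probability (n.-tuple R) R)
  (K1 K2 : R.-pker (n.-tuple R) ~> R) (p : R) : R :=
  (Rintegral (@lebesgue_measure R) [set` `[0, 1]] (Phi muA K1 K2 p)) `^ p^-1.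

From HB Require Import structures.
From mathcomp Require Import all_boot all_order all_algebra.
From mathcomp Require Import all_classical all_reals all_analysis.
From mathcomp Require Import lra measurable_realfun.
Set Implicit Arguments. Unset Strict Implicit. Unset Printing Implicit Defensive.
Import Order.TTheory GRing.Theory Num.Theory.
Import numFieldNormedType.Exports.
Local Open Scope classical_set_scope.
Local Open Scope ring_scope.

(* Write G(x, y) := K(x, [0, y]) for the Markov kernel K of a copula in C_A.
   G takes values in [0, 1], is nondecreasing in y, and integrates to y against
   mu_A because the last marginal is uniform.  Pointwise
   |G1 - G2|^p <= |G1 - G2| <= min(G1 + G2, 2 - G1 - G2), so integrating gives
   Phi(y) <= 2 min(y, 1 - y); this forces Phi(0) = Phi(1) = 0 and, after a
   second integration, D^p <= 1/2.  Combining |a^p - b^p| <= p |a - b| on [0, 1]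
   with the same integral identity for increments makes Phi 2p-Lipschitz.
   The bound is attained by the deterministic kernels y = x_1 and y = 1 - x_1
   (copulas because x_1 is uniform): then |G1 - G2| is the indicator of the
   symmetric difference of {x_1 <= y} and {x_1 >= 1 - y}, of measure
   2 min(y, 1 - y). *)

Section powR_unit_interval.
Context {R : realType}.
Implicit Types (a b p : R).

Lemma powR_le_self a p : 0 <= a <= 1 -> 1 <= p -> a `^ p <= a.
Proof.
move=> /andP[a0 a1] p1; have [->|a_neq0] := eqVneq a 0.
  by rewrite powR0 // gt_eqF // (lt_le_trans _ p1).
by apply: ge1r_powR => //; rewrite a1 andbT lt_def a_neq0.
Qed.

Lemma powR_subr_le a b p : 0 <= b <= a -> a <= 1 -> 1 <= p ->
  a `^ p - b `^ p <= p * (a - b).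
Proof.
move=> /andP[b0 ba] a1 p1; have p0 : 0 < p by rewrite (lt_le_trans _ p1).
have [->|b_neq0] := eqVneq b 0.
  have a0 : 0 <= a by exact: le_trans ba.
  rewrite powR0 ?gt_eqF // !subr0; apply: le_trans (powR_le_self _ p1) _.
    by rewrite a0 a1.
  by rewrite ler_peMl.
have [<-|b_neq_a] := eqVneq b a; first by rewrite !subrr mulr0.
have b_gt0 : 0 < b by rewrite lt_def b_neq0.
have b_lt_a : b < a by rewrite lt_def eq_sym b_neq_a.
(* mean value theorem: the derivative p c^(p-1) is at most p on [b, a] *)
have der x : x \in `]b, a[ -> is_derive x 1 (@powR R ^~ p) (p * x `^ (p - 1)).
  by rewrite in_itv => /andP[bx _]; apply: is_derive1_powR; exact: lt_trans bx.
have cont : {within `[b, a], continuous (@powR R ^~ p)}.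
  apply: derivable_within_continuous => x; rewrite in_itv => /andP[bx _].
  by apply: derivable_powR; rewrite in_itv /= andbT (lt_le_trans b_gt0).
have [c /[!in_itv] /andP[bc ca] ->] := MVT b_lt_a der cont.
rewrite ler_wpM2r ?subr_ge0 ?(ltW b_lt_a) // ger_pMr //.
apply: le_trans (_ : _ <= 1 `^ (p - 1)) _; last by rewrite powR1.
rewrite ge0_ler_powR ?subr_ge0 ?nnegrE ?(ltW (lt_le_trans ca a1)) //.
exact: le_trans (ltW bc).
Qed.

Lemma powR_lipschitz a b p : 0 <= a <= 1 -> 0 <= b <= 1 -> 1 <= p ->
  `|a `^ p - b `^ p| <= p * `|a - b|.
Proof.
move=> /andP[a0 a1] /andP[b0 b1] p1; have p0 : 0 <= p by rewrite (le_trans _ p1).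
wlog ba : a b a0 a1 b0 b1 / b <= a.
  move=> wlog; have [|/ltW ab] := leP b a; first exact: wlog.
  by rewrite distrC [`|a - b|]distrC wlog.
rewrite !ger0_norm ?subr_ge0 ?ge0_ler_powR //.
by rewrite powR_subr_le // b0.
Qed.

End powR_unit_interval.

Lemma lipschitz_within_continuous (R : realType) (A : set R) (f : R -> R) (k : R) :
  0 <= k -> (forall x y, A x -> A y -> `|f x - f y| <= k * `|x - y|) ->
  {within A, continuous f}.
Proof.
move=> k0 lip; apply/subspace_continuousP => x Ax.
apply/cvgrPdist_lt => e e0; have k1 : 0 < k + 1 by rewrite ltr_pwDr.
apply/nbhs_ballP; exists (e / (k + 1)); first by rewrite /= divr_gt0.
move=> z /=; rewrite -ball_normE /= => xz Az.
apply: le_lt_trans (lip _ _ Ax Az) _.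
apply: le_lt_trans (_ : _ <= (k + 1) * `|x - z|) _.
  by rewrite ler_wpM2r // lerDl.
by rewrite mulrC -ltr_pdivlMr.
Qed.

Section tent.
Context {R : realType}.
Notation lebesgue := (@lebesgue_measure R).

Lemma Rintegral_itv_FTC (F f : R -> R) (a b : R) : a < b ->
  (forall x : R, is_derive x (1 : R) F (f x)) -> {within `[a, b], continuous f} ->
  Rintegral lebesgue `[a, b] f = F b - F a.
Proof.
move=> ab dF cf.
have cF x : {for x, continuous F}.
  by apply/differentiable_continuous; rewrite -derivable1_diffP; exact: ex_derive.
rewrite /Rintegral (continuous_FTC2 (F := F) ab cf) //; last first.
  by move=> x _; rewrite derive1E derive_val.
split; first by move=> x _; exact: ex_derive.
- exact/cvg_at_right_filter/cF.
- exact/cvg_at_left_filter/cF.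
Qed.

Definition tent (y : R) : R := 2 * Num.min y (1 - y).

Lemma tent_l y : y <= 1 - y -> tent y = 2 * y.
Proof. by move=> ?; rewrite /tent min_l. Qed.

Lemma tent_r y : 1 - y <= y -> tent y = 2 - 2 * y.
Proof. by move=> ?; rewrite /tent min_r // mulrBr mulr1. Qed.

Lemma tent0 : tent 0 = 0.
Proof. by rewrite tent_l ?mulr0 // subr0 ler01. Qed.

Lemma tent1 : tent 1 = 0.
Proof. by rewrite tent_r ?mulr1 ?subrr // subrr ler01. Qed.

Lemma le_tent z y : z <= 2 * y -> z <= 2 - 2 * y -> z <= tent y.
Proof. by rewrite /tent; have [?|?] := leP y (1 - y); lra. Qed.

Lemma tent_lipschitz y z : `|tent y - tent z| <= 2 * `|y - z|.
Proof.
rewrite /tent; have [yz|yz] := leP 0 (y - z);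
  [rewrite (ger0_norm yz)|rewrite (ltr0_norm yz)];
  have [?|?] := leP y (1 - y); have [?|?] := leP z (1 - z);
  rewrite ler_norml; apply/andP; split; lra.
Qed.

Lemma tent_continuous : {within `[0, 1], continuous tent}.
Proof.
apply: (@lipschitz_within_continuous _ _ _ 2) => // y z _ _.
exact: tent_lipschitz.
Qed.

Lemma Rintegral_tent : Rintegral lebesgue `[0, 1] tent = 2^-1.
Proof.
have split01 : [set` `[0, 1]] = [set` `[0, 2^-1]] `|` [set` `]2^-1, 1]] :> set R.
  apply/seteqP; split => z /=; rewrite !in_itv /=; last first.
    by move=> [] /andP[? ?]; apply/andP; split; lra.
  by move=> /andP[? ?]; have [?|?] := leP z 2^-1; [left|right]; apply/andP; split; lra.
have int01 : lebesgue.-integrable `[0, 1] (EFin \o tent).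
  apply: continuous_compact_integrable; [exact: segment_compact|exact: tent_continuous].
rewrite split01 Rintegral_setU //; first last.
- by apply/disj_setPS => z [/=]; rewrite !in_itv /=; lra.
- by rewrite -split01.
rewrite Rintegral_itv_obnd_cbnd; last first.
  by apply: integrableS int01 => //; rewrite split01; exact: subsetUr.
rewrite (@eq_Rintegral _ _ _ lebesgue _ (fun y : R => 2 * y)); last first.
  by move=> y; rewrite inE /= in_itv /= => /andP[? ?]; apply: tent_l; lra.
rewrite [X in _ + X](@eq_Rintegral _ _ _ lebesgue _ (fun y : R => 2 - 2 * y)); last first.
  by move=> y; rewrite inE /= in_itv /= => /andP[? ?]; apply: tent_r; lra.
have c1 : continuous (fun y : R => 2 * y).
  by move=> x; apply: cvgM; [exact: cvg_cst|exact: cvg_id].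
have c2 : continuous (fun y : R => 2 - 2 * y).
  by move=> x; apply: cvgB; [exact: cvg_cst|exact: c1].
have d1 (x : R) : is_derive x 1 (fun y => y ^+ 2) (2 * x).
  by apply: is_derive_eq; rewrite /GRing.scale /= mulr1; lra.
have d2 (x : R) : is_derive x 1 (fun y => 2 * y - y ^+ 2) (2 - 2 * x).
  by apply: is_derive_eq; rewrite /GRing.scale /= !mulr1; lra.
rewrite (Rintegral_itv_FTC _ d1); [|lra|exact: continuous_subspaceT].
rewrite (Rintegral_itv_FTC _ d2); [lra|lra|exact: continuous_subspaceT].
Qed.

Lemma inv2_powR (r : R) : 2^-1 `^ r = 2 `^ (- r).
Proof. by rewrite -powR_inv1 // -powRrM mulN1r. Qed.

End tent.

Lemma unif_cdfP (R : realType) (t : R) :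
  [\/ t <= 0 /\ unif_cdf t = 0, 0 <= t <= 1 /\ unif_cdf t = t
    | 1 <= t /\ unif_cdf t = 1].
Proof.
rewrite /unif_cdf; have [t0|t0] := leP t 0; first by apply: Or31; rewrite min_l.
have [t1|t1] := leP t 1; first by apply: Or32; rewrite ltW.
by apply: Or33; rewrite ltW.
Qed.

Lemma unif_cdf_id (R : realType) (t : R) : 0 <= t <= 1 -> unif_cdf t = t.
Proof. by case: (unif_cdfP t) => -[]; lra. Qed.

Section probability_bounded.
Context d (T : measurableType d) (R : realType) (P : probability T R).

Lemma bounded_integrable (f : T -> R) (M : R) : measurable_fun setT f ->
  (forall x, `|f x| <= M) -> P.-integrable setT (EFin \o f).
Proof.
move=> mf fM; apply: measurable_bounded_integrable => //.
  by rewrite (le_lt_trans (probability_le1 P measurableT)) ?ltey.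
exists M; split; first exact: num_real.
by move=> r Mr x _; exact: le_trans (fM x) (ltW Mr).
Qed.

Lemma Rintegral_probability_cst (c : R) : Rintegral P setT (fun=> c) = c.
Proof.
rewrite Rintegral_cst // -[RHS]mulr1 -[1 in RHS]/(fine 1%E).
by congr (_ * fine _); exact: probability_setT.
Qed.

Lemma Rintegral_indic (S : set T) : measurable S -> Rintegral P setT \1_S = fine (P S).
Proof. by move=> mS; rewrite /Rintegral integral_indic // setIT. Qed.

End probability_bounded.

Lemma measure_snd_itv (R : realType) d (T : measurableType d)
    (mu : probability (T * R)%type R) (y : R) :
  (forall t, mu [set z | z.2 <= t] = (unif_cdf t)%:E) -> 0 <= y ->
  mu (setT `*` [set` `[0, y]]) = (unif_cdf y)%:E.
Proof.
move=> hmu y0.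
have snd_le t : [set z : T * R | z.2 <= t] = setT `*` [set` `]-oo, t]].
  by apply/seteqP; split => z /=; rewrite in_itv //= => -[].
have neg0 : mu (setT `*` [set` `]-oo, 0[]) = 0.
  apply/eqP; rewrite eq_le measure_ge0 andbT.
  have <- : mu [set z | z.2 <= 0] = 0 by rewrite hmu /unif_cdf maxxx min_l.
  rewrite snd_le; apply: le_measure; rewrite ?inE; try exact: measurableX.
  by move=> z [_]; rewrite /= !in_itv /= => /ltW.
rewrite -hmu snd_le (_ : setT `*` [set` `]-oo, y]] =
    setT `*` [set` `[0, y]] `|` setT `*` [set` `]-oo, 0[]).
  rewrite measureU //; try exact: measurableX.
    by rewrite [X in _ = _ + X](_ : _ = 0) ?adde0 //; exact: neg0.
  apply/seteqP; split => z //= [[_ h1] [_ h2]]; move: h1 h2.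
  by rewrite /= !in_itv /= => /andP[z0 _]; rewrite ltNge z0.
apply/seteqP; split => z /=.
  move=> [_]; rewrite in_itv /= => zy.
  by have [z0|z0] := leP 0 z.2; [left|right]; rewrite in_itv /= ?z0.
case=> -[_ h]; split => //; move: h; rewrite !in_itv /=; first by case/andP.
by move=> /ltW z0; exact: le_trans z0 y0.
Qed.

Section conditional_cdf.
Context {R : realType} d (T : measurableType d) (K : R.-pker T ~> R).

Definition cond_cdf (x : T) (y : R) : R := fine (K x [set` `[0, y]]).

Let kernel_le1 x (S : set R) : measurable S -> (K x S <= 1)%E.
Proof.
by move=> mS; rewrite -(@prob_kernel _ _ _ _ _ K x); apply: le_measure; rewrite ?inE.
Qed.

Lemma EFin_cond_cdf x y : (cond_cdf x y)%:E = K x [set` `[0, y]].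
Proof.
by rewrite fineK // ge0_fin_numE ?measure_ge0 // (le_lt_trans (kernel_le1 _ _)) ?ltey.
Qed.

Lemma cond_cdf_ge0 x y : 0 <= cond_cdf x y.
Proof. by rewrite -lee_fin EFin_cond_cdf measure_ge0. Qed.

Lemma cond_cdf_le1 x y : cond_cdf x y <= 1.
Proof.
by rewrite -lee_fin EFin_cond_cdf kernel_le1.
Qed.

Lemma cond_cdf_itv x y : 0 <= cond_cdf x y <= 1.
Proof. by rewrite cond_cdf_ge0 cond_cdf_le1. Qed.

Lemma le_cond_cdf x y1 y2 : y1 <= y2 -> cond_cdf x y1 <= cond_cdf x y2.
Proof.
move=> y12; rewrite -lee_fin !EFin_cond_cdf; apply: le_measure; rewrite ?inE //.
by move=> z /=; rewrite !in_itv /= => /andP[-> /le_trans ->].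
Qed.

Lemma measurable_cond_cdf y : measurable_fun setT (cond_cdf ^~ y).
Proof.
apply/measurable_EFinP; rewrite (_ : _ \o _ = K ^~ [set` `[0, y]]).
  exact: measurable_kernel.
by apply/funext => x /=; rewrite EFin_cond_cdf.
Qed.

Variable P : probability T R.

Lemma integrable_cond_cdf y : P.-integrable setT (EFin \o cond_cdf ^~ y).
Proof.
apply: (@bounded_integrable _ _ _ _ _ 1); first exact: measurable_cond_cdf.
by move=> x; rewrite ger0_norm ?cond_cdf_ge0 ?cond_cdf_le1.
Qed.

Lemma integrable_cond_cdf_increment y1 y2 :
  P.-integrable setT (EFin \o (fun x => cond_cdf x y2 - cond_cdf x y1)).
Proof.
apply: (@bounded_integrable _ _ _ _ _ 1) => [|x].
  by apply: measurable_funB; exact: measurable_cond_cdf.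
have /andP[? ?] := cond_cdf_itv x y1; have /andP[? ?] := cond_cdf_itv x y2.
by rewrite ler_norml; apply/andP; split; lra.
Qed.

End conditional_cdf.

Lemma Rintegral_cond_cdf (R : realType) (n : nat) (muA : probability (n.-tuple R) R)
    (mu : probability (n.-tuple R * R)%type R) (K : R.-pker (n.-tuple R) ~> R) (y : R) :
  is_copula_measure_xy mu -> is_markov_kernel_of muA mu K -> 0 <= y <= 1 ->
  Rintegral muA setT (cond_cdf K ^~ y) = y.
Proof.
move=> [_ hmu] hK /andP[y0 y1].
rewrite /Rintegral (_ : (\int[muA]_x _)%E = mu (setT `*` [set` `[0, y]])).
  by rewrite measure_snd_itv // unif_cdf_id ?y0.
by rewrite hK //; apply: eq_integral => x _; exact: EFin_cond_cdf.
Qed.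

Lemma Rintegral_cond_cdf_increment (R : realType) (n : nat)
    (muA : probability (n.-tuple R) R) (mu : probability (n.-tuple R * R)%type R)
    (K : R.-pker (n.-tuple R) ~> R) (y1 y2 : R) :
  is_copula_measure_xy mu -> is_markov_kernel_of muA mu K ->
  0 <= y1 -> y1 <= y2 -> y2 <= 1 ->
  Rintegral muA setT (fun x => cond_cdf K x y2 - cond_cdf K x y1) = y2 - y1.
Proof.
move=> hmu hK y10 y12 y21.
rewrite RintegralB //; try exact: integrable_cond_cdf.
have y1_01 : 0 <= y1 <= 1 by rewrite y10 (le_trans y12 y21).
have y2_01 : 0 <= y2 <= 1 by rewrite y21 (le_trans y10 y12).
by rewrite !(Rintegral_cond_cdf hmu hK).
Qed.

Section Phi_bounds.
Context (R : realType) (n : nat) (muA : probability (n.-tuple R) R).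
Variables (mu1 mu2 : probability (n.-tuple R * R)%type R)
  (K1 K2 : R.-pker (n.-tuple R) ~> R).
Hypotheses (hmu1 : is_copula_measure_xy mu1) (hK1 : is_markov_kernel_of muA mu1 K1).
Hypotheses (hmu2 : is_copula_measure_xy mu2) (hK2 : is_markov_kernel_of muA mu2 K2).
Variable p : R.
Hypothesis hp : 1 <= p.

Local Notation G1 := (cond_cdf K1).
Local Notation G2 := (cond_cdf K2).
Local Notation gap y x := `|G1 x y - G2 x y|.

Let measurable_G1 y : measurable_fun setT (G1 ^~ y).
Proof. exact: measurable_cond_cdf. Qed.

Let measurable_G2 y : measurable_fun setT (G2 ^~ y).
Proof. exact: measurable_cond_cdf. Qed.

Let G_itv x y : 0 <= G1 x y <= 1 /\ 0 <= G2 x y <= 1.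
Proof. by rewrite !cond_cdf_itv. Qed.

Let gap_itv y x : 0 <= gap y x <= 1.
Proof.
have [/andP[? ?] /andP[? ?]] := G_itv x y.
by rewrite normr_ge0 /= ler_norml; apply/andP; split; lra.
Qed.

Let measurable_gap_powR y : measurable_fun setT (fun x => gap y x `^ p).
Proof.
apply: (measurableT_comp (measurable_powR _)); apply: measurableT_comp => //.
exact: measurable_funB.
Qed.

Let gap_powR_itv y x : 0 <= gap y x `^ p <= 1.
Proof.
have /andP[g0 g1] := gap_itv y x.
by rewrite powR_ge0 (le_trans (powR_le_self _ hp)) ?g0.
Qed.

Let integrable_gap_powR y : muA.-integrable setT (EFin \o (fun x => gap y x `^ p)).
Proof.
apply: (@bounded_integrable _ _ _ _ _ 1) => [|x]; first exact: measurable_gap_powR.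
by have /andP[? ?] := gap_powR_itv y x; rewrite ger0_norm.
Qed.

Let PhiE y : Phi muA K1 K2 p y = Rintegral muA setT (fun x => gap y x `^ p).
Proof. by []. Qed.

Lemma Phi_ge0 (y : R) : 0 <= Phi muA K1 K2 p y.
Proof. by apply: Rintegral_ge0 => x _; exact: powR_ge0. Qed.

Let Phi_le_Rintegral (y : R) (f : n.-tuple R -> R) (M : R) :
  measurable_fun setT f -> (forall x, `|f x| <= M) ->
  (forall x, gap y x <= f x) -> Phi muA K1 K2 p y <= Rintegral muA setT f.
Proof.
move=> mf fM gap_le; apply: le_Rintegral => //.
- exact: integrable_gap_powR.
- exact: bounded_integrable fM.
- by move=> x _; apply: le_trans (gap_le x); rewrite powR_le_self // gap_itv.
Qed.

Lemma Phi_le_twice (y : R) : 0 <= y <= 1 -> Phi muA K1 K2 p y <= 2 * y.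
Proof.
move=> y01.
have -> : 2 * y = Rintegral muA setT (fun x => G1 x y + G2 x y).
  rewrite RintegralD //; try exact: integrable_cond_cdf.
  by rewrite (Rintegral_cond_cdf hmu1) // (Rintegral_cond_cdf hmu2) //; lra.
apply: (@Phi_le_Rintegral _ _ 2) => [|x|x]; first exact: measurable_funD.
- by have [/andP[? ?] /andP[? ?]] := G_itv x y; rewrite ler_norml; apply/andP; split; lra.
- by have [/andP[? ?] /andP[? ?]] := G_itv x y; rewrite ler_norml; apply/andP; split; lra.
Qed.

Lemma Phi_le_twice_compl (y : R) : 0 <= y <= 1 -> Phi muA K1 K2 p y <= 2 - 2 * y.
Proof.
move=> y01.
have int_compl (K : R.-pker (n.-tuple R) ~> R) :
    muA.-integrable setT (EFin \o (fun x => 1 - cond_cdf K x y)).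
  apply: (@bounded_integrable _ _ _ _ _ 1) => [|x].
    by apply: measurable_funB => //; exact: measurable_cond_cdf.
  by have /andP[? ?] := cond_cdf_itv K x y; rewrite ler_norml; apply/andP; split; lra.
have int_cst : muA.-integrable setT (EFin \o fun=> (1 : R)).
  by apply: (@bounded_integrable _ _ _ _ _ 1) => // x; rewrite normr1.
have -> : 2 - 2 * y = Rintegral muA setT (fun x => (1 - G1 x y) + (1 - G2 x y)).
  rewrite RintegralD // !RintegralB //; try exact: integrable_cond_cdf.
  rewrite Rintegral_probability_cst.
  by rewrite (Rintegral_cond_cdf hmu1) // (Rintegral_cond_cdf hmu2) //; lra.
apply: (@Phi_le_Rintegral _ _ 2) => [|x|x].
- by apply: measurable_funD; exact: measurable_funB.
- by have [/andP[? ?] /andP[? ?]] := G_itv x y; rewrite ler_norml; apply/andP; split; lra.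
- by have [/andP[? ?] /andP[? ?]] := G_itv x y; rewrite ler_norml; apply/andP; split; lra.
Qed.

Lemma Phi_le_tent (y : R) : y \in `[0, 1] -> Phi muA K1 K2 p y <= tent y.
Proof.
rewrite in_itv /= => y01.
by apply: le_tent; [exact: Phi_le_twice|exact: Phi_le_twice_compl].
Qed.

Lemma Phi_at0 : Phi muA K1 K2 p 0 = 0.
Proof.
apply/le_anti; rewrite Phi_ge0 andbT.
by apply: le_trans (Phi_le_tent _) _; rewrite ?tent0 // in_itv /= lexx ler01.
Qed.

Lemma Phi_at1 : Phi muA K1 K2 p 1 = 0.
Proof.
apply/le_anti; rewrite Phi_ge0 andbT.
by apply: le_trans (Phi_le_tent _) _; rewrite ?tent1 // in_itv /= lexx ler01.
Qed.

Let gap_powR_lipschitz x y1 y2 : y1 <= y2 ->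
  `|gap y1 x `^ p - gap y2 x `^ p| <= p * ((G1 x y2 - G1 x y1) + (G2 x y2 - G2 x y1)).
Proof.
move=> y12; apply: le_trans (powR_lipschitz _ _ hp) _; try exact: gap_itv.
rewrite ler_wpM2l ?(le_trans _ hp) //; apply: le_trans (ler_dist_dist _ _) _.
have := le_cond_cdf K1 x y12; have := le_cond_cdf K2 x y12.
by move=> ? ?; rewrite ler_norml; apply/andP; split; lra.
Qed.

Let Phi_lipschitz_le (y1 y2 : R) : 0 <= y1 -> y1 <= y2 -> y2 <= 1 ->
  `|Phi muA K1 K2 p y1 - Phi muA K1 K2 p y2| <= 2 * p * `|y1 - y2|.
Proof.
move=> y10 y12 y21; have p0 : 0 <= p by rewrite (le_trans _ hp).
pose incr x := (G1 x y2 - G1 x y1) + (G2 x y2 - G2 x y1).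
have incr_bound x : `|incr x| <= 2.
  have := le_cond_cdf K1 x y12; have := le_cond_cdf K2 x y12.
  have [/andP[? ?] /andP[? ?]] := G_itv x y1; have [/andP[? ?] /andP[? ?]] := G_itv x y2.
  by move=> ? ?; rewrite /incr ler_norml; apply/andP; split; lra.
have m_incr : measurable_fun setT incr.
  by apply: measurable_funD; apply: measurable_funB.
have gap_powR_dist x : `|gap y1 x `^ p - gap y2 x `^ p| <= 1.
  have /andP[? ?] := gap_powR_itv y1 x; have /andP[? ?] := gap_powR_itv y2 x.
  by rewrite ler_norml; apply/andP; split; lra.
have m_dist : measurable_fun setT (fun x => gap y1 x `^ p - gap y2 x `^ p).
  by apply: measurable_funB; exact: measurable_gap_powR.
rewrite !PhiE -RintegralB //; try exact: integrable_gap_powR.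
apply: le_trans (le_normr_Rintegral _ _) _ => //.
  exact: bounded_integrable m_dist gap_powR_dist.
apply: (@le_trans _ _ (Rintegral muA setT (fun x => p * incr x))).
  apply: le_Rintegral => //; last by move=> x _; exact: gap_powR_lipschitz.
    apply: (@bounded_integrable _ _ _ _ _ 1); last by move=> x; rewrite normr_id.
    exact: measurableT_comp.
  apply: (@bounded_integrable _ _ _ _ _ (p * 2)) => [|x]; first exact: measurable_funM.
  by rewrite normrM ger0_norm // ler_wpM2l.
rewrite RintegralZl //; last exact: bounded_integrable m_incr incr_bound.
rewrite -[Rintegral _ _ _]/(Rintegral muA setT (fun x =>
  (G1 x y2 - G1 x y1) + (G2 x y2 - G2 x y1))).
rewrite RintegralD //; try exact: integrable_cond_cdf_increment.
rewrite (Rintegral_cond_cdf_increment hmu1 hK1) //.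
rewrite (Rintegral_cond_cdf_increment hmu2 hK2) //.
by rewrite distrC ger0_norm ?subr_ge0 //; lra.
Qed.

Lemma Phi_lipschitz (y1 y2 : R) : y1 \in `[0, 1] -> y2 \in `[0, 1] ->
  `|Phi muA K1 K2 p y1 - Phi muA K1 K2 p y2| <= 2 * p * `|y1 - y2|.
Proof.
rewrite !in_itv /= => /andP[? ?] /andP[? ?].
have [y12|/ltW y21] := leP y1 y2; first exact: Phi_lipschitz_le.
by rewrite distrC [`|y1 - y2|]distrC; exact: Phi_lipschitz_le.
Qed.

Lemma Phi_continuous : {within `[0, 1], continuous (Phi muA K1 K2 p)}.
Proof.
apply: (@lipschitz_within_continuous _ _ _ (2 * p)).
  by rewrite mulr_ge0 // (le_trans _ hp).
by move=> y1 y2 y1_01 y2_01; apply: Phi_lipschitz; rewrite inE.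
Qed.

Lemma Dist_le : Dist muA K1 K2 p <= 2 `^ (- p^-1).
Proof.
have int_Phi : lebesgue_measure.-integrable `[0, 1] (EFin \o Phi muA K1 K2 p).
  apply: continuous_compact_integrable; [exact: segment_compact|exact: Phi_continuous].
have int_tent : lebesgue_measure.-integrable `[0, 1] (EFin \o @tent R).
  apply: continuous_compact_integrable; [exact: segment_compact|exact: tent_continuous].
have Phi_le : Rintegral lebesgue_measure `[0, 1] (Phi muA K1 K2 p) <= 2^-1.
  by rewrite -Rintegral_tent; apply: le_Rintegral => // y /= y01; exact: Phi_le_tent.
rewrite /Dist -inv2_powR ge0_ler_powR ?invr_ge0 ?(le_trans _ hp) ?nnegrE //.
by apply: Rintegral_ge0 => y _; exact: Phi_ge0.
Qed.

End Phi_bounds.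

Lemma Dist_tent (R : realType) (n : nat) (muA : probability (n.-tuple R) R)
    (K1 K2 : R.-pker (n.-tuple R) ~> R) (p : R) :
  {in `[0, 1], Phi muA K1 K2 p =1 tent} -> Dist muA K1 K2 p = 2 `^ (- p^-1).
Proof.
move=> Phi_tent; rewrite /Dist -inv2_powR -Rintegral_tent; congr (_ `^ _).
by apply: eq_Rintegral => y; rewrite inE => /Phi_tent.
Qed.

Section graph_measure.
Context (R : realType) (n : nat) (muA : probability (n.-tuple R) R).
Variables (f : n.-tuple R -> R) (mf : measurable_fun setT f).

Definition graph (x : n.-tuple R) : (n.-tuple R * R)%type := (x, f x).

Lemma measurable_graph : measurable_fun setT graph.
Proof. exact: measurable_fun_pair. Qed.

HB.instance Definition _ := isMeasurableFun.Build _ _ _ _ graph measurable_graph.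

Definition graph_measure : probability (n.-tuple R * R)%type R :=
  distribution muA graph.

Lemma graph_measureE S : graph_measure S = muA (graph @^-1` S).
Proof. by []. Qed.

Lemma has_marginal_graph : has_marginal muA graph_measure.
Proof.
move=> B mB; rewrite graph_measureE; congr (muA _).
by apply/seteqP; split => x /=; [case|].
Qed.

Lemma markov_kernel_graph : is_markov_kernel_of muA graph_measure (kdirac mf).
Proof.
move=> B F mB mF; rewrite graph_measureE.
have mfF : measurable (f @^-1` F) by rewrite -[X in measurable X]setTI; exact: mf.
rewrite [RHS](_ : _ = \int[muA]_(x in B) (\1_(f @^-1` F) x)%:E)%E.
  by rewrite integral_indic // setIC.
by apply: eq_integral => x _; rewrite /kdirac /= diracE indicE.
Qed.

Lemma copula_measure_graph : is_copula_measure muA ->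
  (forall t, muA [set x | f x <= t] = (unif_cdf t)%:E) ->
  is_copula_measure_xy graph_measure.
Proof.
by move=> hA hf; split => [i t|t]; rewrite graph_measureE; [exact: hA|exact: hf].
Qed.

Lemma cond_cdf_kdirac x y : cond_cdf (kdirac mf) x y = \1_[set` `[0, y]] (f x).
Proof. by []. Qed.

End graph_measure.

Section copula_coordinate.
Context (R : realType) (n : nat) (muA : probability (n.-tuple R) R) (i : 'I_n).
Hypothesis hA : is_copula_measure muA.

Lemma measurable_tnth_preimage (S : set R) : measurable S ->
  measurable [set x : n.-tuple R | S (tnth x i)].
Proof. by move=> mS; rewrite -[X in measurable X]setTI; exact: measurable_tnth. Qed.

Lemma copula_measure_lt s : muA [set x | tnth x i < s] = (unif_cdf s)%:E.
Proof.
have mlt : measurable [set x : n.-tuple R | tnth x i < s].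
  exact: (measurable_tnth_preimage (measurable_itv `]-oo, s[)).
have le_cdf : (muA [set x | (tnth x i < s)%R] <= (unif_cdf s)%:E)%E.
  rewrite -(hA i); apply: le_measure; rewrite ?inE //; last by move=> x /ltW.
  exact: (measurable_tnth_preimage (measurable_itv `]-oo, s])).
have fin : muA [set x | tnth x i < s] \is a fin_num.
  by rewrite ge0_fin_numE ?measure_ge0 // (le_lt_trans le_cdf) ?ltey.
rewrite -(fineK fin); congr EFin; apply/eqP; rewrite eq_le -lee_fin fineK // le_cdf /=.
(* P(x_i <= s - e) <= P(x_i < s), and unif_cdf is 1-Lipschitz *)
apply/ler_addgt0Pr => e e0; rewrite -lerBlDr.
apply: (@le_trans _ _ (unif_cdf (s - e))).
  by case: (unif_cdfP s) => -[? ->]; case: (unif_cdfP (s - e)) => -[? ->]; lra.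
rewrite -lee_fin fineK // -(hA i); apply: le_measure; rewrite ?inE //.
  exact: (measurable_tnth_preimage (measurable_itv `]-oo, (s - e)])).
by move=> x /= xs; rewrite (le_lt_trans xs) // ltrBlDr ltrDl.
Qed.

Lemma copula_measure_itv a b : a <= b ->
  muA [set x | a <= tnth x i <= b] = (unif_cdf b - unif_cdf a)%:E.
Proof.
move=> ab.
have mitv : measurable [set x : n.-tuple R | a <= tnth x i <= b].
  exact: (measurable_tnth_preimage (measurable_itv `[a, b])).
have mlt : measurable [set x : n.-tuple R | tnth x i < a].
  exact: (measurable_tnth_preimage (measurable_itv `]-oo, a[)).
have := hA i b; rewrite (_ : [set x | tnth x i <= b] =
    [set x | a <= tnth x i <= b] `|` [set x | tnth x i < a]).
  rewrite measureU //; last first.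
    by apply/seteqP; split => x //= [/andP[ax _]]; rewrite ltNge ax.
  rewrite EFinB => <-; rewrite -(copula_measure_lt a) addeK //.
  by rewrite ge0_fin_numE ?measure_ge0 // (le_lt_trans (probability_le1 muA mlt)) ?ltey.
apply/seteqP; split => x /=.
  by move=> xb; have [ax|xa] := leP a (tnth x i); [left; apply/andP|right].
by case=> [/andP[_ ->]|/ltW/le_trans]//; apply.
Qed.

Lemma copula_measure_compl t : muA [set x | 1 - tnth x i <= t] = (unif_cdf t)%:E.
Proof.
rewrite (_ : [set x | 1 - tnth x i <= t] = ~` [set x | tnth x i < 1 - t]); last first.
  apply/seteqP; split => x /=; first by move=> ?; apply/negP; rewrite -leNgt; lra.
  by move/negP; rewrite -leNgt => ?; lra.
rewrite probability_setC; last first.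
  exact: (measurable_tnth_preimage (measurable_itv `]-oo, (1 - t)[)).
rewrite copula_measure_lt -EFinB; congr EFin.
by case: (unif_cdfP t) => -[? ->]; case: (unif_cdfP (1 - t)) => -[? ->]; lra.
Qed.

End copula_coordinate.

Lemma in_set_bool (T : Type) (P : T -> bool) x : (x \in [set y | P y]) = P x.
Proof. by apply/idP/idP => [/set_mem|/mem_set]. Qed.

Lemma measurable_coord (R : realType) (n : nat) (i : 'I_n) :
  measurable_fun setT (fun x : n.-tuple R => tnth x i).
Proof. exact: measurable_tnth. Qed.

Lemma measurable_flip_coord (R : realType) (n : nat) (i : 'I_n) :
  measurable_fun setT (fun x : n.-tuple R => 1 - tnth x i).
Proof. by apply: measurable_funB => //; exact: measurable_tnth. Qed.

Section extremal_kernels.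
Context (R : realType) (n : nat) (muA : probability (n.-tuple R) R) (i : 'I_n).
Hypothesis hA : is_copula_measure muA.
Variable p : R.
Hypothesis hp : 1 <= p.

Local Notation band a b := [set x : n.-tuple R | a <= tnth x i <= b].
Local Notation K1 := (kdirac (measurable_coord (R := R) i)).
Local Notation K2 := (kdirac (measurable_flip_coord (R := R) i)).
Local Notation mu1 := (graph_measure muA (measurable_coord (R := R) i)).
Local Notation mu2 := (graph_measure muA (measurable_flip_coord (R := R) i)).

Lemma extremal_copulas :
  [/\ is_copula_measure_xy mu1 /\ is_copula_measure_xy mu2,
      has_marginal muA mu1 /\ has_marginal muA mu2 &
      is_markov_kernel_of muA mu1 K1 /\ is_markov_kernel_of muA mu2 K2].
Proof.
split; split; try exact: has_marginal_graph; try exact: markov_kernel_graph.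
  exact: copula_measure_graph.
by apply: copula_measure_graph => //; exact: copula_measure_compl.
Qed.

Let measurable_band a b : measurable (band a b).
Proof. exact: (measurable_tnth_preimage i (measurable_itv `[a, b])). Qed.

Let integrable_indic_band a b :
  muA.-integrable setT (EFin \o (\1_(band a b) : n.-tuple R -> R)).
Proof.
apply: (@bounded_integrable _ _ _ _ _ 1); first exact: measurable_indic.
by move=> x; rewrite indicE; case: (_ \in _); rewrite ?normr1 ?normr0.
Qed.

Let muA_band (a b : R) : 0 <= a -> a <= b -> b <= 1 -> muA (band a b) = (b - a)%:E.
Proof.
move=> a0 ab b1; rewrite copula_measure_itv //.
by rewrite !unif_cdf_id ?a0 ?b1 ?(le_trans a0 ab) ?(le_trans ab b1).
Qed.

(* band (1 - y) y is the intersection of the other two bands, so the integrand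
   is the indicator of their symmetric difference *)
Let extremal_integrand (y : R) x : 0 <= y <= 1 ->
  `|cond_cdf K1 x y - cond_cdf K2 x y| `^ p =
  (\1_(band 0 y) x + \1_(band (1 - y) 1) x) -
  (\1_(band (1 - y) y) x + \1_(band (1 - y) y) x).
Proof.
move=> /andP[y0 y1]; have p0 : p != 0 by rewrite gt_eqF // (lt_le_trans _ hp).
rewrite !cond_cdf_kdirac !indicE !in_set_bool !in_itv /=.
have -> : (1 - y <= tnth x i <= 1) = (0 <= 1 - tnth x i <= y).
  by apply/idP/idP => /andP[? ?]; apply/andP; split; lra.
have -> : (1 - y <= tnth x i <= y) = (0 <= tnth x i <= y) && (0 <= 1 - tnth x i <= y).
  apply/idP/idP; first by move=> /andP[? ?]; apply/andP; split; apply/andP; split; lra.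
  by move=> /andP[/andP[? ?] /andP[? ?]]; apply/andP; split; lra.
case: (0 <= tnth x i <= y); case: (0 <= 1 - tnth x i <= y) => /=;
  rewrite ?subrr ?subr0 ?sub0r ?normrN ?normr0 ?normr1 ?powR0 ?powR1 //; lra.
Qed.

Lemma Phi_extremal (y : R) : y \in `[0, 1] -> Phi muA K1 K2 p y = tent y.
Proof.
rewrite in_itv /= => y01; have /andP[y0 y1] := y01.
have int_pair a b c e : muA.-integrable setT
    (EFin \o (fun x => \1_(band a b) x + \1_(band c e) x : R)).
  apply: (@bounded_integrable _ _ _ _ _ 2) => [|x].
    by apply: measurable_funD; exact: measurable_indic.
  by rewrite !indicE; do 2 case: (_ \in _); rewrite /= ?normr0 ?ger0_norm //; lra.
have -> : Phi muA K1 K2 p y = Rintegral muA setT (fun x =>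
    (\1_(band 0 y) x + \1_(band (1 - y) 1) x) -
    (\1_(band (1 - y) y) x + \1_(band (1 - y) y) x)).
  by apply: eq_Rintegral => x _; exact: extremal_integrand.
rewrite RintegralB // !RintegralD // !Rintegral_indic //.
rewrite (@muA_band 0 y) ?(@muA_band (1 - y) 1) /=; try lra.
have [y_half|y_half] := leP (1 - y) y.
  by rewrite (@muA_band (1 - y) y) ?tent_r //=; lra.
have -> : band (1 - y) y = set0 by apply/seteqP; split => x //= /andP[? ?]; lra.
by rewrite measure0 /= tent_l; lra.
Qed.

End extremal_kernels.

Theorem lemma17 (R : realType) (d : nat) (hd : (2 <= d)%N)
  (muA : probability (d.-1.-tuple R) R) (hA : is_copula_measure muA)
  (p : R) (hp : 1 <= p) :
  (forall (mu1 mu2 : probability (d.-1.-tuple R * R)%type R)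
          (K1 K2 : R.-pker (d.-1.-tuple R) ~> R),
      is_copula_measure_xy mu1 -> is_copula_measure_xy mu2 ->
      has_marginal muA mu1 -> has_marginal muA mu2 ->
      is_markov_kernel_of muA mu1 K1 -> is_markov_kernel_of muA mu2 K2 ->
      [/\ (Phi muA K1 K2 p 0 = 0 /\ Phi muA K1 K2 p 1 = 0),
          ({within `[0, 1], continuous (Phi muA K1 K2 p)} /\
          (p = 1 -> forall y1 y2 : R, y1 \in `[0, 1] -> y2 \in `[0, 1] ->
             `|Phi muA K1 K2 p y1 - Phi muA K1 K2 p y2| <= 2 * `|y1 - y2|)),
          (forall y : R, y \in `[0, 1] ->
             Phi muA K1 K2 p y <= 2 * Num.min y (1 - y)) &
          Dist muA K1 K2 p <= 2 `^ (- p^-1)]) /\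
  (exists (mu1 mu2 : probability (d.-1.-tuple R * R)%type R)
          (K1 K2 : R.-pker (d.-1.-tuple R) ~> R),
      [/\ is_copula_measure_xy mu1 /\ is_copula_measure_xy mu2,
          has_marginal muA mu1 /\ has_marginal muA mu2,
          is_markov_kernel_of muA mu1 K1 /\ is_markov_kernel_of muA mu2 K2 &
          forall y : R, y \in `[0, 1] ->
            Phi muA K1 K2 p y = 2 * Num.min y (1 - y)]) /\
  (exists (mu1 mu2 : probability (d.-1.-tuple R * R)%type R)
          (K1 K2 : R.-pker (d.-1.-tuple R) ~> R),
      [/\ is_copula_measure_xy mu1 /\ is_copula_measure_xy mu2,
          has_marginal muA mu1 /\ has_marginal muA mu2,
          is_markov_kernel_of muA mu1 K1 /\ is_markov_kernel_of muA mu2 K2 &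
          Dist muA K1 K2 p = 2 `^ (- p^-1)]).
Proof.
split.
  move=> mu1 mu2 K1 K2 hmu1 hmu2 _ _ hK1 hK2; split.
  - by rewrite (Phi_at0 hmu1 hK1 hmu2 hK2 hp) (Phi_at1 hmu1 hK1 hmu2 hK2 hp).
  - split; first exact: (Phi_continuous hmu1 hK1 hmu2 hK2 hp).
    move=> p1 y1 y2 y1_01 y2_01; subst p.
    by have := Phi_lipschitz hmu1 hK1 hmu2 hK2 hp y1_01 y2_01; rewrite mulr1.
  - by move=> y; apply: (Phi_le_tent hmu1 hK1 hmu2 hK2 hp).
  - exact: (Dist_le hmu1 hK1 hmu2 hK2 hp).
have i : 'I_d.-1 by exists 0%N; rewrite -ltnS prednK // ltnW.
pose mu1 := graph_measure muA (measurable_coord i).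
pose mu2 := graph_measure muA (measurable_flip_coord i).
pose K1 : R.-pker d.-1.-tuple R ~> R := kdirac (measurable_coord i).
pose K2 : R.-pker d.-1.-tuple R ~> R := kdirac (measurable_flip_coord i).
have [copulas marginals kernels] := extremal_copulas i hA.
have Phi_tent : {in `[0, 1], Phi muA K1 K2 p =1 tent} := Phi_extremal i hA hp.
by split; exists mu1, mu2, K1, K2; split => //; exact: Dist_tent.
Qed.
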